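(* Let $c\in(0,1)$ be a constant with the following property: for every Poisson Binomial distribution $q$ on $\mathbb Z_{\geq 0}$ with mode $k^*$, one has $q(k^* )\geq \frac{c}{\sqrt{k^*+1}}$. Let $p:\mathbb Z_{\geq 0}\to\mathbb R_{\geq 0}$ be a Poisson Binomial distribution and let $k\geq 1$ be an integer with $$p(k)<\frac{c}{12\sqrt{3(k+1)}}.$$ Set $P_{<k}=\sum_{i<k}p(i)$ and $P_{>k}=\sum_{i>k}p(i)$. Then: (1) if the mode of $p$ is less than $k$, then $P_{>k}\leq \frac12-\frac{c}{12}$; (2) if the mode of $p$ is greater than $k$, then $P_{<k}\leq \frac12-\frac{c}{12}$.
   Context: A Poisson Binomial distribution is the distribution on $\mathbb Z_{\geq 0}$ of $\sum_{i=1}^N b_i$ where $N$ is a nonnegative integer and $b_1,\dots,b_N$ are independent Bernoulli random variables with arbitrary success probabilities $\pi_i\in[0,1]$. The mode of a distribution $p$ on $\mathbb Z_{\geq 0}$ is the smallest integer maximizing $p$ (ties are broken by taking the smaller value). *)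

From HB Require Import structures.
From mathcomp Require Import all_boot all_order all_algebra.
From mathcomp Require Import reals.
Set Implicit Arguments. Unset Strict Implicit. Unset Printing Implicit Defensive.
Import Order.TTheory GRing.Theory Num.Theory.
Local Open Scope ring_scope.

Definition pb_pmf (R : realType) (N : nat) (pi : 'I_N -> R) (k : nat) : R :=
  \sum_(S : {set 'I_N} | #|S| == k)
     ((\prod_(i in S) pi i) * (\prod_(i in ~: S) (1 - pi i))).

Definition probs_ok (R : realType) (N : nat) (pi : 'I_N -> R) : Prop :=
  forall i, 0 <= pi i <= 1.

Definition is_mode (R : realType) (p : nat -> R) (m : nat) : Prop :=
  (forall j, p j <= p m) /\ (forall j, (j < m)%N -> p j < p m).

(* P_{<k} and P_{>k}; for a PB distribution with N trials p i = 0 for i > N,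
   so the (infinite) sum P_{>k} is the finite sum over k < i <= N. *)
Definition P_lt (R : realType) (p : nat -> R) (k : nat) : R :=
  \sum_(0 <= i < k) p i.
Definition P_gt (R : realType) (N : nat) (p : nat -> R) (k : nat) : R :=
  \sum_(k.+1 <= i < N.+1) p i.

(* The key structural fact is that p is log-concave in the strong form
   p(a) p(b) <= p(c) p(d) whenever a <= c, a <= d and a + b = c + d.  We prove
   it for the coefficient sequence of the generating polynomial
   prod_i (pi_i X + 1 - pi_i), by induction on the number of trials: one more
   trial mixes the sequence with its shift, which preserves the property.

   For any such distribution with mode m, comparing p(m) p(i) with a product
   through k gives p(m) P_{>k} <= p(k) when m < k and p(m) P_{<k} <= p(k) when
   m > k; moreover p is nondecreasing up to m, so P_{<k} <= k p(k) and
   (m + 1 - k) p(k) <= 1.  Combining these with the hypothesis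
   p(m) >= c / sqrt(m + 1) and p(k) < c / (12 sqrt(3(k + 1))), squared to get
   rid of the roots, yields P_{>k} < 1/12 and P_{<k} < 1/4 respectively, both
   below 1/2 - c/12 since c < 1. *)

From mathcomp Require Import all_boot all_order all_algebra.
From mathcomp Require Import reals ring lra zify.
Import Order.TTheory GRing.Theory Num.Theory.
Set Implicit Arguments. Unset Strict Implicit. Unset Printing Implicit Defensive.
Local Open Scope ring_scope.

Section LogConcavity.
Variable R : realFieldType.

Definition central_log_concave (G : int -> R) : Prop :=
  forall a b c d : int, a <= c -> a <= d -> a + b = c + d ->
    G a * G b <= G c * G d.

Lemma central_log_concave_mix (G : int -> R) (t : R) :
  0 <= t <= 1 -> (forall z, 0 <= G z) -> central_log_concave G ->
  central_log_concave (fun z => (1 - t) * G z + t * G (z - 1)).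
Proof.
move=> /andP[t0 t1] G0 HG a b c d ac ad e /=.
have cross : G a * G (b - 1) + G (a - 1) * G b
              <= G c * G (d - 1) + G (c - 1) * G d.
  have [ead | /eqP nead] := eqVneq a d.
    have ebc : b = c by lia.
    by rewrite ead ebc addrC [G (d - 1) * _]mulrC [G d * _]mulrC.
  by apply: lerD; apply: HG; lia.
have shifted : G (a - 1) * G (b - 1) <= G (c - 1) * G (d - 1).
  by apply: HG; lia.
have expand x y : ((1 - t) * G x + t * G (x - 1)) * ((1 - t) * G y + t * G (y - 1))
    = (1 - t) ^+ 2 * (G x * G y) + t * (1 - t) * (G x * G (y - 1) + G (x - 1) * G y)
      + t ^+ 2 * (G (x - 1) * G (y - 1)) by ring.
rewrite !expand; apply: lerD; first apply: lerD.
- by apply: ler_wpM2l; [exact: sqr_ge0 | exact: HG].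
- by apply: ler_wpM2l => //; rewrite mulr_ge0 ?subr_ge0.
- by apply: ler_wpM2l => //; exact: sqr_ge0.
Qed.

Definition zcoef (p : {poly R}) (z : int) : R :=
  if z is Posz n then p`_n else 0.

Lemma zcoef_mul_bernoulli (p : {poly R}) (t : R) (z : int) :
  zcoef ((t *: 'X + (1 - t)%:P) * p) z = (1 - t) * zcoef p z + t * zcoef p (z - 1).
Proof.
case: z => [[|n]|n] /=; last by rewrite !mulr0 addr0.
- by rewrite mulrDl coefD -scalerAl coefZ coefXM coefCM mulr0 add0r addr0.
- by rewrite mulrDl coefD -scalerAl coefZ coefXM coefCM addrC subn1.
Qed.

End LogConcavity.

Definition pb_poly (R : realType) (N : nat) (pi : 'I_N -> R) : {poly R} :=
  \prod_(i < N) (pi i *: 'X + (1 - pi i)%:P).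

Section PoissonBinomial.
Variables (R : realType) (N : nat) (pi : 'I_N -> R).
Hypothesis pi_ok : probs_ok pi.

(* Expanding the product over the trials groups the terms by success set. *)
Lemma pb_pmf_coef (n : nat) : pb_pmf pi n = (pb_poly pi)`_n.
Proof.
rewrite /pb_poly (@bigA_distr _ _ _ _ _ _ (fun i => pi i *: 'X) (fun i => (1 - pi i)%:P)).
rewrite coef_sum /pb_pmf big_mkcond /=; apply: eq_bigr => S _.
have split_prod : \prod_i (if i \in S then pi i *: 'X else (1 - pi i)%:P)
    = \prod_(i in S) (pi i *: 'X) * \prod_(i in ~: S) (1 - pi i)%:P.
  rewrite (bigID (mem S)) /=; congr (_ * _).
    by apply: eq_bigr => i ->.
  by apply: eq_big => [i|i /negbTE ->]; rewrite ?inE.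
rewrite split_prod scaler_prodr -rmorph_prod -scalerAl coefZ coefMC coefXn.
by rewrite eq_sym; case: (n == #|S|); rewrite /= ?mul1r ?mul0r ?mulr0.
Qed.

Lemma pb_pmf_ge0 (n : nat) : 0 <= pb_pmf pi n.
Proof.
apply: sumr_ge0 => S _; have pi01 i := andP (pi_ok i).
by apply: mulr_ge0; apply: prodr_ge0 => i _; rewrite ?subr_ge0; case: (pi01 i).
Qed.

(* At most N trials can succeed. *)
Lemma pb_pmf_out (n : nat) : (N < n)%N -> pb_pmf pi n = 0.
Proof.
move=> Nn; rewrite /pb_pmf big_pred0 // => S.
apply/negbTE; rewrite neq_ltn; apply/orP; left.
by apply: leq_ltn_trans Nn; rewrite -[X in (_ <= X)%N]card_ord max_card.
Qed.

(* The total mass is the value of the generating polynomial at 1. *)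
Lemma pb_pmf_sum : \sum_(0 <= i < N.+1) pb_pmf pi i = 1.
Proof.
have size_pb : (size (pb_poly pi) <= N.+1)%N.
  by apply/leq_sizeP => j Nj; rewrite -pb_pmf_coef pb_pmf_out.
have := horner_coef_wide 1 size_pb.
rewrite big_mkord; under eq_bigr => i _ do rewrite expr1n mulr1 -pb_pmf_coef.
move=> <-; rewrite /pb_poly horner_prod; apply: big1 => i _.
by rewrite hornerD hornerZ hornerX hornerC mulr1 addrC subrK.
Qed.

Lemma pb_poly_log_concave : central_log_concave (zcoef (pb_poly pi)).
Proof.
suff [] : (forall z, 0 <= zcoef (pb_poly pi) z) /\
          central_log_concave (zcoef (pb_poly pi)) by [].
rewrite /pb_poly; elim/big_rec: _ => [|i p _ [p_ge0 p_lc]].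
  have zcoef1 z : zcoef 1 z = (z == 0)%:R :> R by case: z => [[|n]|n]; rewrite /= ?coef1.
  split=> [z|a b c d ac ad e]; rewrite !zcoef1 //.
  have [a0|] := eqVneq a 0; have [b0|] := eqVneq b 0; rewrite ?mulr0 ?mul0r ?mulr_ge0 //.
  by have [-> ->] : c = 0 /\ d = 0 by lia.
have pi01 := pi_ok i.
split=> [z|]; last first.
  move=> a b c d ac ad e; rewrite !zcoef_mul_bernoulli.
  exact: (central_log_concave_mix pi01 p_ge0 p_lc).
have /andP[t0 t1] := pi01.
by rewrite zcoef_mul_bernoulli addr_ge0 // mulr_ge0 ?subr_ge0.
Qed.

Lemma pb_pmf_log_concave (a b c d : nat) :
  (a <= c)%N -> (a <= d)%N -> (a + b = c + d)%N ->
  pb_pmf pi a * pb_pmf pi b <= pb_pmf pi c * pb_pmf pi d.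
Proof.
move=> ac ad e; rewrite !pb_pmf_coef.
by have := @pb_poly_log_concave a b c d; rewrite /= !lez_nat -!PoszD e; apply.
Qed.

End PoissonBinomial.

Section ModeBounds.
Variables (R : realType) (f : nat -> R) (N : nat).
Hypotheses (f_ge0 : forall n, 0 <= f n) (f_out : forall n, (N < n)%N -> f n = 0)
  (f_sum : \sum_(0 <= i < N.+1) f i = 1)
  (f_lc : forall a b c d : nat, (a <= c)%N -> (a <= d)%N -> (a + b = c + d)%N ->
     f a * f b <= f c * f d).

Lemma partial_sum_le1 (a b : nat) : \sum_(a <= i < b) f i <= 1.
Proof.
have [ab|ba] := leqP a b; last by rewrite big_geq // ltnW.
apply: (@le_trans _ _ (\sum_(0 <= i < b) f i)).
  by rewrite (big_cat_nat (leq0n a) ab) /= lerDr sumr_ge0.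
have [bN|Nb] := leqP b N.+1.
  by rewrite -f_sum (big_cat_nat (leq0n b) bN) /= lerDl sumr_ge0.
rewrite (big_cat_nat (leq0n N.+1) (ltnW Nb)) /= f_sum big_nat_cond big1 ?addr0 //.
by move=> i /andP[/andP[Ni _] _]; apply: f_out.
Qed.

Lemma mode_gt0 (m : nat) : is_mode f m -> 0 < f m.
Proof.
move=> [f_le_m _]; rewrite ltNge; apply/negP => fm_le0.
have : \sum_(0 <= i < N.+1) f i <= \sum_(0 <= i < N.+1) 0.
  by apply: ler_sum => i _; apply: le_trans fm_le0.
by rewrite f_sum big1 // ler10.
Qed.

Lemma le_up_to_mode (m x y : nat) : is_mode f m -> (x <= y)%N -> (y <= m)%N ->
  f x <= f y.
Proof.
move=> fm xy ym; rewrite -(ler_pM2r (mode_gt0 fm)).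
apply: (@le_trans _ _ (f y * f (x + m - y)%N)); first by apply: f_lc; lia.
by apply: ler_wpM2l => //; case: fm.
Qed.

(* For m < k, log-concavity gives f m * f i <= f k * f (i - (k - m)) for
   every i > k, and the shifted masses add up to at most 1. *)
Lemma mass_times_tail_le (m k : nat) : (m < k)%N -> f m * P_gt N f k <= f k.
Proof.
move=> mk; rewrite /P_gt.
have -> : k.+1 = (m.+1 + (k - m))%N by lia.
rewrite big_addn mulr_sumr.
apply: (@le_trans _ _ (\sum_(m.+1 <= i < N.+1 - (k - m)) f k * f i)).
  by apply: ler_sum_nat => i /andP[mi _]; apply: f_lc; lia.
by rewrite -mulr_sumr ler_piMr // partial_sum_le1.
Qed.

(* Symmetrically, for k < m: f x * f m <= f k * f (x + (m - k)) for x < k. *)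
Lemma mass_times_head_le (m k : nat) : (k < m)%N -> f m * P_lt f k <= f k.
Proof.
move=> km; rewrite /P_lt mulr_sumr.
apply: (@le_trans _ _ (\sum_(0 <= x < k) f k * f (x + (m - k))%N)).
  by apply: ler_sum_nat => x /andP[_ xk]; rewrite mulrC; apply: f_lc; lia.
rewrite -mulr_sumr ler_piMr //.
have := partial_sum_le1 (m - k) (k + (m - k))%N.
by rewrite -{1}(add0n (m - k)%N) big_addn addnK.
Qed.

(* Masses below k are at most f k when k lies left of the mode. *)
Lemma head_le_mass_at (m k : nat) : is_mode f m -> (k <= m)%N ->
  P_lt f k <= k%:R * f k.
Proof.
move=> fm km; rewrite /P_lt mulr_natl -[k in _ *+ k]subn0 -sumr_const_nat.
by apply: ler_sum_nat => x /andP[_ xk]; apply: (le_up_to_mode fm); lia.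
Qed.

(* All of f k, ..., f m are at least f k and add up to at most 1. *)
Lemma window_mass_le1 (m k : nat) : is_mode f m -> (k <= m)%N ->
  (m.+1 - k)%:R * f k <= 1.
Proof.
move=> fm km; apply: le_trans (partial_sum_le1 k m.+1).
rewrite mulr_natl -sumr_const_nat; apply: ler_sum_nat => y /andP[ky ym].
by apply: (le_up_to_mode fm); lia.
Qed.

End ModeBounds.

Section Arithmetic.
Variable R : rcfType.

Lemma sqr_le_of_div_sqrt (a x y : R) : 0 < y -> 0 <= a -> a / Num.sqrt y <= x ->
  a ^+ 2 <= x ^+ 2 * y.
Proof.
move=> y0 a0; rewrite ler_pdivrMr ?sqrtr_gt0 // => ale.
rewrite -(sqr_sqrtr (ltW y0)) -exprMn ler_pXn2r // ?nnegrE //.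
exact: le_trans ale.
Qed.

Lemma sqr_lt_of_lt_div_sqrt (a x y : R) : 0 < y -> 0 <= x -> x < a / Num.sqrt y ->
  x ^+ 2 * y < a ^+ 2.
Proof.
move=> y0 x0; rewrite ltr_pdivlMr ?sqrtr_gt0 // => xlt.
have xs0 : 0 <= x * Num.sqrt y by rewrite mulr_ge0 ?sqrtr_ge0.
rewrite -(sqr_sqrtr (ltW y0)) -exprMn ltr_pXn2r // ?nnegrE //.
exact: le_trans (ltW xlt).
Qed.

(* Endgame when the mode m lies below k: with fm = p(m), fk = p(k),
   P = P_{>k}, M = m + 1 <= K1 = k + 1. *)
Lemma tail_mass_small (c fm fk P M K1 : R) :
  0 <= P -> 0 <= fm -> 0 <= fk -> 0 <= M -> M <= K1 -> fm * P <= fk ->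
  c ^+ 2 <= fm ^+ 2 * M -> fk ^+ 2 * (3 * K1) < (c / 12) ^+ 2 -> 12 * P < 1.
Proof.
move=> P0 fm0 fk0 M0 MK fmP cM fkK.
have fk2 : 432 * K1 * fk ^+ 2 < c ^+ 2 by lra.
have fmP2 : (fm * P) ^+ 2 <= fk ^+ 2 by rewrite ler_pXn2r ?nnegrE ?mulr_ge0.
have K10 : 0 <= K1 by lra.
set X := fm ^+ 2 * K1.
have X_ub : X * (432 * P ^+ 2) < X.
  have : 432 * K1 * (fm * P) ^+ 2 <= 432 * K1 * fk ^+ 2 by rewrite ler_wpM2l ?mulr_ge0.
  have : fm ^+ 2 * M <= X by rewrite ler_wpM2l ?sqr_ge0.
  rewrite /X exprMn; lra.
have X0 : 0 < X.
  have : 0 <= X * (432 * P ^+ 2) by rewrite !mulr_ge0 ?sqr_ge0.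
  lra.
rewrite -[X in _ < X]mulr1 ltr_pM2l // in X_ub; nra.
Qed.

(* Endgame when the mode m lies above k: here P = P_{<k} <= k p(k) and the
   mode is at most 1/p(k) positions beyond k. *)
Lemma head_mass_small (c fm fk P M K K1 : R) :
  0 < c -> 0 <= P -> 0 <= fm -> 0 <= fk -> 0 <= K -> K <= K1 ->
  fm * P <= fk -> P <= K * fk -> (M - K) * fk <= 1 ->
  c ^+ 2 <= fm ^+ 2 * M -> fk ^+ 2 * (3 * K1) < (c / 12) ^+ 2 -> 4 * P < 1.
Proof.
move=> c0 P0 fm0 fk0 K0 KK1 fmP Pk Mk cM fkK.
have fk2 : 432 * K * fk ^+ 2 < c ^+ 2.
  have : K * fk ^+ 2 <= K1 * fk ^+ 2 by rewrite ler_wpM2r ?sqr_ge0.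
  lra.
have fmP2 : (fm * P) ^+ 2 <= fk ^+ 2 by rewrite ler_pXn2r ?nnegrE ?mulr_ge0.
have cP2 : c ^+ 2 * P ^+ 2 <= M * fk ^+ 2.
  have : c ^+ 2 * P ^+ 2 <= fm ^+ 2 * M * P ^+ 2 by rewrite ler_wpM2r ?sqr_ge0.
  have M0 : 0 <= M by have := sqr_ge0 c; nra.
  have : M * (fm * P) ^+ 2 <= M * fk ^+ 2 by rewrite ler_wpM2l.
  rewrite exprMn; lra.
have Mfk : M * fk ^+ 2 <= fk + K * fk ^+ 2 by nra.
have Pfk : P * fk <= K * fk ^+ 2 by nra.
have cubic : c ^+ 2 * (432 * P ^+ 3) < c ^+ 2 * (1 + P).
  have : P * (432 * K * fk ^+ 2) <= P * c ^+ 2 by rewrite ler_wpM2l // ltW.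
  have : c ^+ 2 * P ^+ 3 <= P * (fk + K * fk ^+ 2).
    have -> : c ^+ 2 * P ^+ 3 = P * (c ^+ 2 * P ^+ 2) by ring.
    by rewrite ler_wpM2l //; lra.
  nra.
rewrite ltr_pM2l ?exprn_gt0 // in cubic; nra.
Qed.

End Arithmetic.

Unset Implicit Arguments.

Theorem lemma2 (R : realType) (c : R) (hc0 : 0 < c) (hc1 : c < 1)
  (hc : forall (M : nat) (rho : 'I_M -> R) (m : nat),
        probs_ok rho -> is_mode (pb_pmf rho) m ->
        c / Num.sqrt (m.+1)%:R <= pb_pmf rho m)
  (N : nat) (pi : 'I_N -> R) (hpi : probs_ok pi) (k : nat) (hk : (1 <= k)%N)
  (hpk : pb_pmf pi k < c / (12 * Num.sqrt (3 * (k.+1)%:R))) :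
  (forall m : nat, is_mode (pb_pmf pi) m -> (m < k)%N ->
     P_gt N (pb_pmf pi) k <= 1 / 2 - c / 12) /\
  (forall m : nat, is_mode (pb_pmf pi) m -> (k < m)%N ->
     P_lt (pb_pmf pi) k <= 1 / 2 - c / 12).
Proof.
have f_ge0 := pb_pmf_ge0 hpi; have f_out := pb_pmf_out pi.
have f_sum := pb_pmf_sum pi; have f_lc := pb_pmf_log_concave hpi.
have fk_small : pb_pmf pi k ^+ 2 * (3 * (k.+1)%:R) < (c / 12) ^+ 2.
  apply: sqr_lt_of_lt_div_sqrt => //; first by rewrite mulr_gt0.
  by rewrite -mulrA -invfM.
have fm_large m : is_mode (pb_pmf pi) m -> c ^+ 2 <= pb_pmf pi m ^+ 2 * (m.+1)%:R.
  by move=> fm; apply: sqr_le_of_div_sqrt; [exact: ltr0Sn | exact: ltW | exact: hc].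
split=> m fm mk.
- have P_ge0 : 0 <= P_gt N (pb_pmf pi) k by apply: sumr_ge0 => i _.
  have mk1 : ((m.+1)%:R <= (k.+1)%:R :> R) by rewrite ler_nat; lia.
  have := tail_mass_small P_ge0 (f_ge0 m) (f_ge0 k) (ler0n _ _) mk1
    (mass_times_tail_le f_ge0 f_out f_sum f_lc mk) (fm_large m fm) fk_small.
  lra.
- have P_ge0 : 0 <= P_lt (pb_pmf pi) k by apply: sumr_ge0 => i _.
  have kk1 : (k%:R <= (k.+1)%:R :> R) by rewrite ler_nat.
  have window := window_mass_le1 f_ge0 f_out f_sum f_lc fm (ltnW mk).
  rewrite natrB in window; last exact: leqW (ltnW mk).
  have := head_mass_small hc0 P_ge0 (f_ge0 m) (f_ge0 k) (ler0n _ k)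
    kk1 (mass_times_head_le f_ge0 f_out f_sum f_lc mk)
    (head_le_mass_at f_ge0 f_sum f_lc fm (ltnW mk)) window (fm_large m fm) fk_small.
  lra.
Qed.
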